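(* Let $v,\widetilde v,w\in\mathbb{R}^n$ and let $M\in\mathbb{R}^{n\times n}$ be symmetric. Let $S=\operatorname{supp}(\widetilde v-v)$, $\partial S=\operatorname{supp}(w-\widetilde v)$, $S^{\mathrm{new}}=\operatorname{supp}(w-v)$, $S'=(S\cup\partial S)\setminus S^{\mathrm{new}}$, $\Delta=\widetilde V-V$, $\Delta^{\mathrm{new}}=W-V$, and $$N=\mathcal L_*\big[(\Delta^{\mathrm{new}}_{S^{\mathrm{new}},S^{\mathrm{new}}})^{-1}+M_{S^{\mathrm{new}},S^{\mathrm{new}}}\big]-\mathcal L_*\big[\Delta_{S,S}^{-1}+M_{S,S}\big].$$ Then every nonzero entry of $N$ lies in $(S\setminus\partial S)\times\partial S$, $\partial S\times(S\setminus\partial S)$ or $\partial S\times\partial S$. Moreover: $N_{S\setminus\partial S,\ \partial S\setminus S}=M_{S\setminus\partial S,\ \partial S\setminus S}$; $N_{S\setminus\partial S,\ S'}=-M_{S\setminus\partial S,\ S'}$; and $N_{S\setminus\partial S,\ (S\cap\partial S)\setminus S'}=0$.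
   Context: For $u\in\mathbb{R}^n$, $U=\operatorname{diag}(u)$ (so $V,\widetilde V,W$ are the diagonal matrices of $v,\widetilde v,w$). $\operatorname{supp}(u)=\{i:u_i\ne0\}$. For a matrix $X$ and index sets $I,J$, $X_{I,J}$ is the submatrix with rows $I$ and columns $J$. For $T\subseteq[n]$ and a matrix $K$ with rows and columns indexed by $T$, $\mathcal L_*[K]$ denotes the matrix indexed by $[n]\times[n]$ that equals $K$ on $T\times T$, has entry $1$ on each diagonal position $(i,i)$ with $i\notin T$, and $0$ elsewhere (the same index $i\in[n]$ occupies the same position in every such embedding). Note $\Delta_{S,S}$ and $\Delta^{\mathrm{new}}_{S^{\mathrm{new}},S^{\mathrm{new}}}$ are invertible diagonal matrices. *)

From HB Require Import structures.
From mathcomp Require Import all_boot all_order all_algebra.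
Set Implicit Arguments. Unset Strict Implicit. Unset Printing Implicit Defensive.
Import Order.TTheory GRing.Theory Num.Theory.
Local Open Scope ring_scope.

Definition supp (R : ringType) (n : nat) (u : 'rV[R]_n) : {set 'I_n} :=
  [set i | u 0 i != 0].

(* X_{T,T}: the submatrix of X with rows and columns in T, indexed by
   'I_#|T| through the increasing enumeration enum_val of T *)
Definition subTT (R : ringType) (n : nat) (T : {set 'I_n}) (X : 'M[R]_n)
  : 'M[R]_#|T| :=
  \matrix_(a, b) X (enum_val a) (enum_val b).

(* L_*[K]: K placed on T x T (via the same enumeration), 1 on the diagonal
   positions (i,i) with i \notin T, 0 elsewhere *)
Definition Lstar (R : ringType) (n : nat) (T : {set 'I_n}) (K : 'M[R]_#|T|)
  : 'M[R]_n :=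
  \sum_(a < #|T|) \sum_(b < #|T|) K a b *: delta_mx (enum_val a) (enum_val b)
  + \sum_(i < n | i \notin T) delta_mx i i.

From mathcomp Require Import all_boot all_order all_algebra.
Import GRing.Theory Num.Theory.
Local Open Scope ring_scope.

(* For T = supp z, the (i, j) entry of L_*[((diag z)_{T,T})^-1 + M_{T,T}] is
   [i = j] / z_i + M_ij when z_i and z_j are both nonzero, and [i = j]
   otherwise.  With x = vt - v and y = w - vt we have Delta = diag x and
   Deltanew = diag (x + y), so N_ij only depends on x, y at i and j.  It
   vanishes when y_i = y_j = 0, or when x and x + y both vanish at i or at j.
   If x_i <> 0 = y_i and y_j <> 0, then i <> j and
   N_ij = ([(x + y)_j <> 0] - [x_j <> 0]) M_ij, which is M_ij, -M_ij or 0 on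
   the three column blocks of the statement. *)

Section Lstar.
Variables (R : nzRingType) (n : nat) (T : {set 'I_n}) (K : 'M[R]_#|T|).

Lemma Lstar_enum_val a b : Lstar K (enum_val a) (enum_val b) = K a b.
Proof.
rewrite !mxE !summxE [X in _ + X]big1 => [|k kT]; last first.
  by rewrite mxE; case: eqP => // ak; rewrite -ak enum_valP in kT.
rewrite addr0 (bigD1 a) //= [X in _ + X]big1 => [|a' a'a]; last first.
  rewrite summxE big1 // => b' _.
  by rewrite !mxE (inj_eq enum_val_inj) eq_sym (negbTE a'a) mulr0.
rewrite addr0 summxE (bigD1 b) //= big1 => [|b' b'b]; last first.
  by rewrite !mxE !(inj_eq enum_val_inj) eqxx eq_sym (negbTE b'b) mulr0.
by rewrite !mxE !eqxx mulr1 addr0.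
Qed.

Lemma Lstar_out i j : ~~ ((i \in T) && (j \in T)) -> Lstar K i j = (i == j)%:R.
Proof.
move=> ijT; rewrite !mxE !summxE big1 ?add0r => [|a _]; last first.
  rewrite summxE big1 // => b _; rewrite !mxE.
  by case: eqP ijT => [->|]; case: eqP => [->|] //=; rewrite ?enum_valP ?mulr0.
case: (boolP (i \in T)) ijT => [iT /= jT|iT _].
  rewrite big1 => [|k kT]; last first.
    by rewrite mxE; case: eqP => // ik; rewrite -ik iT in kT.
  by case: eqP => // ij; rewrite -ij iT in jT.
rewrite (bigD1 i) //= big1 => [|k /andP[_ ki]]; last first.
  by rewrite mxE eq_sym (negbTE ki).
by rewrite mxE eqxx addr0 eq_sym.
Qed.

End Lstar.

Lemma subTT_diag (R : nzRingType) n (T : {set 'I_n}) (d : 'rV[R]_n) :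
  subTT T (diag_mx d) = diag_mx (\row_a d 0 (enum_val a)).
Proof. by apply/matrixP => a b; rewrite !mxE (inj_eq enum_val_inj). Qed.

Lemma invmx_diag (R : fieldType) m (d : 'rV[R]_m) :
  (forall a, d 0 a != 0) -> invmx (diag_mx d) = diag_mx (\row_a (d 0 a)^-1).
Proof.
move=> d_neq0; set B := diag_mx (\row_a _).
have dB : diag_mx d *m B = 1%:M.
  rewrite mulmx_diag -diag_const_mx; congr diag_mx.
  by apply/rowP => a; rewrite !mxE mulfV.
have [d_unit _] := mulmx1_unit dB.
by rewrite -[RHS](mulKmx d_unit) dB mulmx1.
Qed.

Section LinvAdd.
Variables (R : fieldType) (n : nat) (M : 'M[R]_n).

Definition Linv_add (z : 'rV[R]_n) : 'M[R]_n :=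
  Lstar (invmx (subTT (supp z) (diag_mx z)) + subTT (supp z) M).

Lemma invmx_subTT_supp (z : 'rV[R]_n) :
  invmx (subTT (supp z) (diag_mx z)) = diag_mx (\row_a (z 0 (enum_val a))^-1).
Proof.
rewrite subTT_diag invmx_diag => [|a].
  by apply/matrixP => a b; rewrite !mxE.
by rewrite mxE; have := enum_valP a; rewrite inE.
Qed.

Lemma Linv_addE (z : 'rV[R]_n) i j :
  Linv_add z i j = if (z 0 i != 0) && (z 0 j != 0)
                   then (i == j)%:R * (z 0 i)^-1 + M i j else (i == j)%:R.
Proof.
case: ifPn => [/andP[zi zj]|zij]; last by rewrite Lstar_out // !inE.
have [iT jT] : i \in supp z /\ j \in supp z by rewrite !inE.
rewrite -(enum_rankK_in iT iT) -(enum_rankK_in jT jT) Lstar_enum_val.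
by rewrite invmx_subTT_supp !mxE (inj_eq enum_val_inj) mulr_natl.
Qed.

Lemma Linv_add_out (z : 'rV[R]_n) i j :
  (z 0 i == 0) || (z 0 j == 0) -> Linv_add z i j = (i == j)%:R.
Proof. by move=> zij; rewrite Linv_addE -negb_or zij. Qed.

Lemma Linv_add_offdiag (z : 'rV[R]_n) i j :
  i != j -> Linv_add z i j = ((z 0 i != 0) && (z 0 j != 0))%:R * M i j.
Proof.
move=> /negPf ij; rewrite Linv_addE ij mul0r add0r.
by case: ifP => _; rewrite ?mul1r ?mul0r.
Qed.

Lemma Linv_add_congr (z z' : 'rV[R]_n) i j :
  z 0 i = z' 0 i -> z 0 j = z' 0 j -> Linv_add z i j = Linv_add z' i j.
Proof. by rewrite !Linv_addE => -> ->. Qed.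

Section Update.
Variables x y : 'rV[R]_n.

Local Notation N := (Linv_add (x + y) - Linv_add x).

Lemma Linv_add_updateE i j : N i j = Linv_add (x + y) i j - Linv_add x i j.
Proof. by rewrite !mxE. Qed.

Lemma Linv_add_update_support (i j : 'I_n) :
  N i j != 0 ->
     (i \in supp x :\: supp y) && (j \in supp y)
  || (i \in supp y) && (j \in supp x :\: supp y)
  || (i \in supp y) && (j \in supp y).
Proof.
have xyE k : (x + y) 0 k = x 0 k + y 0 k by rewrite mxE.
apply: contraNT; rewrite Linv_add_updateE !inE.
case: (eqVneq (y 0 i) 0) => yi; case: (eqVneq (y 0 j) 0) => yj;
  rewrite /= ?andbF ?andbT ?orbF ?negbK => xij; apply/eqP.
- by rewrite (@Linv_add_congr _ x) ?subrr //; rewrite xyE ?yi ?yj addr0.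
- by rewrite !Linv_add_out ?subrr //; rewrite ?xyE ?yi ?addr0 xij.
- by rewrite !Linv_add_out ?subrr //; rewrite ?xyE ?yj ?addr0 xij orbT.
- by [].
Qed.

Lemma Linv_add_update_row (i j : 'I_n) :
  x 0 i != 0 -> y 0 i = 0 -> y 0 j != 0 ->
  N i j = (((x + y) 0 j != 0)%:R - (x 0 j != 0)%:R) * M i j.
Proof.
move=> xi yi yj; have ij : i != j by apply: contraNneq yj => <-; rewrite yi.
rewrite Linv_add_updateE !Linv_add_offdiag //.
by rewrite [(x + y) 0 i]mxE yi addr0 xi mulrBl.
Qed.

Lemma Linv_add_update_outer i j :
  i \in supp x :\: supp y -> j \in supp y :\: supp x -> N i j = M i j.
Proof.
rewrite !inE => /andP[/negPn/eqP yi xi] /andP[/negPn/eqP xj yj].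
by rewrite Linv_add_update_row // mxE xj add0r yj eqxx subr0 mul1r.
Qed.

Lemma Linv_add_update_cancel i j :
  i \in supp x :\: supp y -> j \in (supp x :|: supp y) :\: supp (x + y) ->
  N i j = - M i j.
Proof.
rewrite !inE => /andP[/negPn/eqP yi xi] /andP[/negPn/eqP xyj xj_or_yj].
have yxj : y 0 j = - x 0 j by apply/eqP; rewrite -addr_eq0 addrC -xyj mxE.
have xj : x 0 j != 0 by move: xj_or_yj; rewrite yxj oppr_eq0 orbb.
by rewrite Linv_add_update_row ?yxj ?oppr_eq0 // xyj eqxx xj sub0r mulN1r.
Qed.

Lemma Linv_add_update_common i j :
  i \in supp x :\: supp y ->
  j \in (supp x :&: supp y) :\: ((supp x :|: supp y) :\: supp (x + y)) ->
  N i j = 0.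
Proof.
rewrite !inE => /andP[/negPn/eqP yi xi] /andP[+ /andP[xj yj]].
rewrite xj andbT negbK => xyj.
by rewrite Linv_add_update_row // xyj xj subrr mul0r.
Qed.

End Update.

End LinvAdd.

Theorem lemmaA5 (R : realFieldType) (n : nat) (v vt w : 'rV[R]_n)
  (M : 'M[R]_n) (HM : M^T = M) :
  let S := supp (vt - v) in
  let dS := supp (w - vt) in
  let Snew := supp (w - v) in
  let S' := (S :|: dS) :\: Snew in
  let Delta := diag_mx vt - diag_mx v in
  let Deltanew := diag_mx w - diag_mx v in
  let N := Lstar (invmx (subTT Snew Deltanew) + subTT Snew M)
           - Lstar (invmx (subTT S Delta) + subTT S M) in
  (forall i j, N i j != 0 ->
      (i \in S :\: dS) && (j \in dS)
   || (i \in dS) && (j \in S :\: dS)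
   || (i \in dS) && (j \in dS))
  /\ (forall i j, i \in S :\: dS -> j \in dS :\: S -> N i j = M i j)
  /\ (forall i j, i \in S :\: dS -> j \in S' -> N i j = - M i j)
  /\ (forall i j, i \in S :\: dS -> j \in (S :&: dS) :\: S' -> N i j = 0).
Proof.
rewrite -!(raddfB (@diag_mx R n)) /=.
have -> : w - v = (vt - v) + (w - vt) by rewrite [RHS]addrC addrA subrK.
move: (vt - v) (w - vt) => x y.
split; [|split; [|split]].
- exact: Linv_add_update_support.
- exact: Linv_add_update_outer.
- exact: Linv_add_update_cancel.
- exact: Linv_add_update_common.
Qed.
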